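(* Consider the homogeneous two-fluid model in $\mathbb{R}^d$: unknowns are the volume fractions $\alpha^\pm\in[0,1]$ with $\alpha^++\alpha^-=1$, the phase densities $\rho^\pm>0$, a common velocity field $\vec{u}$, a common pressure $p$ and the mixture specific internal energy $e$, satisfying \begin{align*} (\alpha^+\rho^+)_t + \nabla\cdot(\alpha^+\rho^+\vec{u}) &= 0,\\ (\alpha^-\rho^-)_t + \nabla\cdot(\alpha^-\rho^-\vec{u}) &= 0,\\ (\rho\vec{u})_t + \nabla\cdot(\rho\vec{u}\otimes\vec{u} + p\,\mathbb{I}) &= \rho\vec{g},\\ (\rho E)_t + \nabla\cdot(\rho H\vec{u}) &= \rho\vec{g}\cdot\vec{u}, \end{align*} where $\vec g$ is a constant gravity vector, $\rho=\alpha^+\rho^++\alpha^-\rho^-$, $E=e+\tfrac12|\vec u|^2$, $H=E+p/\rho$, and the system is closed by the mixture equation of state described in the context. Let $\alpha=\alpha^+-\alpha^-$, and let $s$ be the mixture specific entropy defined by $2\rho s=(1+\alpha)\rho^+s^++(1-\alpha)\rho^-s^-$. Then continuous solutions of this system satisfy \begin{align*} \vec{u}_t + \vec{u}\cdot\nabla\vec{u} + \frac{1}{\rho}\nabla p &= \vec{g},\\ p_t + \vec{u}\cdot\nabla p + \rho c_s^2\,\nabla\cdot\vec{u} &= 0,\\ \alpha_t + \vec{u}\cdot\nabla\alpha + (1-\alpha^2)\,\delta\,\nabla\cdot\vec{u} &= 0,\\ s_t + \vec{u}\cdot\nabla s &= 0, \end{align*} where $c_s$ and $\delta$ are defined as follows: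 with $(c_s^\pm)^2=\dfrac{\gamma^\pm p+\pi^\pm}{\rho^\pm}$ and $$\rho a^2=\frac{(1+\alpha)\rho^+(c_s^+)^2}{2(\gamma^+-1)}+\frac{(1-\alpha)\rho^-(c_s^-)^2}{2(\gamma^--1)},$$ $c_s>0$ is given by $$\frac{1}{\rho c_s^2}=\frac{(1+\alpha)\gamma^+}{2\rho^+(c_s^+)^2}+\frac{(1-\alpha)\gamma^-}{2\rho^-(c_s^-)^2}-\frac{1}{\rho a^2},$$ and $$\delta=\frac12\,\frac{\rho c_s^2(\gamma^-\pi^+-\gamma^+\pi^-)}{\rho^+\rho^-(c_s^+)^2(c_s^-)^2}.$$
   Context: Each pure fluid (superscript $+$ for liquid, $-$ for gas) obeys a stiffened-gas equation of state with constants $\gamma^\pm>1$, $C_V^\pm>0$, $\pi^\pm\ge 0$: $p^\pm+\pi^\pm=(\gamma^\pm-1)\rho^\pm e^\pm$ and $e^\pm=C_V^\pm T^\pm+\dfrac{\pi^\pm}{\gamma^\pm\rho^\pm}$, where $e^\pm,T^\pm$ are the specific internal energy and temperature of phase $\pm$. The mixture equation of state $p=\mathcal P(\alpha,\rho,e)$ is defined by requiring pressure and temperature equilibrium between the phases: given $\alpha\in[-1,1]$, $\rho>0$, $e>0$, one solves for $\rho^\pm,e^\pm$ the system $(1+\alpha)\rho^++(1-\alpha)\rho^-=2\rho$, $(1+\alpha)\rho^+e^++(1-\alpha)\rho^-e^-=2\rho e$, $p^+=p^-$, $T^+=T^-$, and sets $p=p^\pm$, $T=T^\pm$. Here $s^\pm$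 denotes the specific entropy of phase $\pm$ (a function of $(\rho^\pm,e^\pm)$ satisfying $T^\pm ds^\pm=de^\pm+p^\pm d(1/\rho^\pm)$). *)

From HB Require Import structures.
From mathcomp Require Import all_boot all_order all_algebra.
From mathcomp Require Import all_classical all_reals all_analysis.
Set Implicit Arguments. Unset Strict Implicit. Unset Printing Implicit Defensive.
Import Order.TTheory GRing.Theory Num.Theory.
Import numFieldNormedType.Exports.
Local Open Scope ring_scope.

Section TwoFluid.
Variables (R : realType) (d : nat).

Notation sfield := (R -> 'rV[R]_d -> R).

Definition ei (i : 'I_d) : 'rV[R]_d := delta_mx 0 i.

Definition dt (F : sfield) (t : R) (x : 'rV[R]_d) : R :=
  derive1 (fun tau : R => F tau x) t.

Definition dx (i : 'I_d) (F : sfield) (t : R) (x : 'rV[R]_d) : R :=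
  derive1 (fun h : R => F t (x + h *: ei i)) 0.

Definition partial_derivable (F : sfield) : Prop :=
  forall t x, derivable (fun tau : R => F tau x) t 1 /\
    forall i, derivable (fun h : R => F t (x + h *: ei i)) 0 1.

Definition divergence (u : 'I_d -> sfield) (t : R) (x : 'rV[R]_d) : R :=
  \sum_i dx i (u i) t x.

Definition advect (u : 'I_d -> sfield) (F : sfield) (t : R) (x : 'rV[R]_d) : R :=
  \sum_i u i t x * dx i F t x.

End TwoFluid.

(* Stiffened gas EOS of one phase: p + pi = (gamma-1) rho e,
   e = Cv T + pi/(gamma rho). *)
Definition sg_pressure {R : realType} (gam pi rho e : R) : R :=
  (gam - 1) * rho * e - pi.
Definition sg_temperature {R : realType} (gam Cv pi rho e : R) : R :=
  (e - pi / (gam * rho)) / Cv.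
(* specific entropy s = Cv ln(T rho^(1-gamma)) + s0 (s0 arbitrary constant);
   it satisfies T ds = de + p d(1/rho). *)
Definition sg_entropy {R : realType} (gam Cv pi s0 rho e : R) : R :=
  Cv * (ln (sg_temperature gam Cv pi rho e) - (gam - 1) * ln rho) + s0.

Definition sound2 {R : realType} (gam pi rho p : R) : R := (gam * p + pi) / rho.

Definition mix_rho_a2 {R : realType} (gp gm pip pim a rp rm p : R) : R :=
  (1 + a) * rp * sound2 gp pip rp p / (2 * (gp - 1))
  + (1 - a) * rm * sound2 gm pim rm p / (2 * (gm - 1)).

Definition mix_rho_cs2 {R : realType} (gp gm pip pim a rp rm p : R) : R :=
  ((1 + a) * gp / (2 * rp * sound2 gp pip rp p)
   + (1 - a) * gm / (2 * rm * sound2 gm pim rm p)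
   - 1 / mix_rho_a2 gp gm pip pim a rp rm p)^-1.

Definition mix_delta {R : realType} (gp gm pip pim a rp rm p : R) : R :=
  (1 / 2) * (mix_rho_cs2 gp gm pip pim a rp rm p * (gm * pip - gp * pim))
  / (rp * rm * sound2 gp pip rp p * sound2 gm pim rm p).

From HB Require Import structures.
From mathcomp Require Import all_boot all_order all_algebra.
From mathcomp Require Import all_classical all_reals all_analysis.
From mathcomp Require Import ring lra.
Import Order.TTheory GRing.Theory Num.Theory.
Import numFieldNormedType.Exports.
Local Open Scope ring_scope.
Set Implicit Arguments. Unset Strict Implicit.

(* Write D = ∂t + u·∇ for the material derivative.  Each conservation law becomes a
   transport equation: D(α±ρ±) = -α±ρ± ∇·u, ρ Du = ρ g - ∇p and, after subtracting the
   kinetic energy balance, ρ De = -p ∇·u.  Both phases being stiffened gases in pressure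
   and temperature equilibrium, ρe is affine in p with coefficients α±, and ln T+ = ln T-
   differentiates to γ+ Dp/(γ+ p + π+) - Dρ+/ρ+ = γ- Dp/(γ- p + π-) - Dρ-/ρ-.  With the two
   mass balances these are four linear relations between Dα+, Dρ±/ρ±, Dp and ∇·u:
   eliminating the density rates expresses Dα+ through Dp, and the energy balance then
   gives Dp = -ρ c_s² ∇·u and Dα = -(1-α²) δ ∇·u.  For the entropy, the Gibbs relation
   T ds = de + p d(1/ρ) turns α+ρ+ Ds+ + α-ρ- Ds- into the internal energy balance, so ρs
   obeys the same continuity equation as ρ and s = ρs/ρ is transported. *)

Section PartialDerivatives.
Variables (R : realType) (d : nat).
Notation sfield := (R -> 'rV[R]_d -> R).
Implicit Types (F G : sfield) (t : R) (x : 'rV[R]_d) (i : 'I_d).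

Lemma addr_ei0 x i : x + 0 *: ei R i = x.
Proof. by rewrite scale0r addr0. Qed.

Lemma is_derive_dt F t x :
  partial_derivable F -> is_derive t 1 (fun tau => F tau x) (dt F t x).
Proof. by case/(_ t x) => /derivableP; rewrite /dt derive1E. Qed.

Lemma is_derive_dx F t x i :
  partial_derivable F -> is_derive (0 : R) 1 (fun h => F t (x + h *: ei R i)) (dx i F t x).
Proof. by case/(_ t x) => _ /(_ i)/derivableP; rewrite /dx derive1E. Qed.

Lemma dt_is_derive F t x df : is_derive t 1 (fun tau => F tau x) df -> dt F t x = df.
Proof. by move=> H; rewrite /dt derive1E derive_val. Qed.

Lemma dx_is_derive F t x i df :
  is_derive (0 : R) 1 (fun h => F t (x + h *: ei R i)) df -> dx i F t x = df.
Proof. by move=> H; rewrite /dx derive1E derive_val. Qed.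

Lemma partial_derivableP F (Ft : sfield) (Fx : 'I_d -> sfield) :
  (forall t x, is_derive t 1 (fun tau => F tau x) (Ft t x)) ->
  (forall t x i, is_derive (0 : R) 1 (fun h => F t (x + h *: ei R i)) (Fx i t x)) ->
  partial_derivable F.
Proof. by move=> Ht Hx t x; split=> [|i]; [case: (Ht t x) | case: (Hx t x i)]. Qed.

Lemma partial_derivableC (c : R) : partial_derivable (fun (_ : R) (_ : 'rV[R]_d) => c).
Proof.
by apply: (@partial_derivableP _ (fun _ _ => 0) (fun _ _ _ => 0)) => *;
  apply: is_derive_cst.
Qed.

Lemma dtC (c : R) t x : dt (fun (_ : R) (_ : 'rV[R]_d) => c) t x = 0.
Proof. by apply: dt_is_derive; apply: is_derive_cst. Qed.

Lemma dxC (c : R) i t x : dx i (fun (_ : R) (_ : 'rV[R]_d) => c) t x = 0.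
Proof. by apply: dx_is_derive; apply: is_derive_cst. Qed.

Section Binary.
Variables (F G : sfield).
Hypotheses (HF : partial_derivable F) (HG : partial_derivable G).

Let is_derive_dtD t x :
  is_derive t 1 (fun tau => F tau x + G tau x) (dt F t x + dt G t x).
Proof. exact (is_deriveD (is_derive_dt t x HF) (is_derive_dt t x HG)). Qed.

Let is_derive_dxD t x i : is_derive (0 : R) 1
  (fun h => F t (x + h *: ei R i) + G t (x + h *: ei R i)) (dx i F t x + dx i G t x).
Proof. exact (is_deriveD (is_derive_dx t x i HF) (is_derive_dx t x i HG)). Qed.

Let is_derive_dtB t x :
  is_derive t 1 (fun tau => F tau x - G tau x) (dt F t x - dt G t x).
Proof. exact (is_deriveB (is_derive_dt t x HF) (is_derive_dt t x HG)). Qed.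

Let is_derive_dxB t x i : is_derive (0 : R) 1
  (fun h => F t (x + h *: ei R i) - G t (x + h *: ei R i)) (dx i F t x - dx i G t x).
Proof. exact (is_deriveB (is_derive_dx t x i HF) (is_derive_dx t x i HG)). Qed.

Let is_derive_dtM t x :
  is_derive t 1 (fun tau => F tau x * G tau x) (F t x * dt G t x + G t x * dt F t x).
Proof. exact (is_deriveM (is_derive_dt t x HF) (is_derive_dt t x HG)). Qed.

Let is_derive_dxM t x i : is_derive (0 : R) 1
  (fun h => F t (x + h *: ei R i) * G t (x + h *: ei R i))
  (F t x * dx i G t x + G t x * dx i F t x).
Proof.
by have := is_deriveM (is_derive_dx t x i HF) (is_derive_dx t x i HG); rewrite /= addr_ei0.
Qed.

Lemma partial_derivableD : partial_derivable (fun t x => F t x + G t x).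
Proof. exact: partial_derivableP is_derive_dtD is_derive_dxD. Qed.

Lemma partial_derivableB : partial_derivable (fun t x => F t x - G t x).
Proof. exact: partial_derivableP is_derive_dtB is_derive_dxB. Qed.

Lemma partial_derivableM : partial_derivable (fun t x => F t x * G t x).
Proof. exact: partial_derivableP is_derive_dtM is_derive_dxM. Qed.

Lemma dtD t x : dt (fun t x => F t x + G t x) t x = dt F t x + dt G t x.
Proof. exact: dt_is_derive. Qed.

Lemma dxD i t x : dx i (fun t x => F t x + G t x) t x = dx i F t x + dx i G t x.
Proof. exact: dx_is_derive. Qed.

Lemma dtB t x : dt (fun t x => F t x - G t x) t x = dt F t x - dt G t x.
Proof. exact: dt_is_derive. Qed.

Lemma dxB i t x : dx i (fun t x => F t x - G t x) t x = dx i F t x - dx i G t x.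
Proof. exact: dx_is_derive. Qed.

Lemma dtM t x : dt (fun t x => F t x * G t x) t x = F t x * dt G t x + G t x * dt F t x.
Proof. exact: dt_is_derive. Qed.

Lemma dxM i t x : dx i (fun t x => F t x * G t x) t x = F t x * dx i G t x + G t x * dx i F t x.
Proof. exact: dx_is_derive. Qed.

End Binary.

Section Composition.
Variables (f df : R -> R) (F : sfield).
Hypotheses (Hf : forall t x, is_derive (F t x) 1 f (df (F t x))) (HF : partial_derivable F).

Let is_derive_dt_comp t x :
  is_derive t 1 (fun tau => f (F tau x)) (df (F t x) * dt F t x).
Proof. exact (is_derive1_comp (Hf t x) (is_derive_dt t x HF)). Qed.

Let is_derive_dx_comp t x i :
  is_derive (0 : R) 1 (fun h => f (F t (x + h *: ei R i))) (df (F t x) * dx i F t x).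
Proof.
have Hf0 : is_derive (F t (x + 0 *: ei R i)) 1 f (df (F t x)) by rewrite addr_ei0.
exact (is_derive1_comp Hf0 (is_derive_dx t x i HF)).
Qed.

Lemma partial_derivable_comp : partial_derivable (fun t x => f (F t x)).
Proof. exact: partial_derivableP is_derive_dt_comp is_derive_dx_comp. Qed.

Lemma dt_comp t x : dt (fun t x => f (F t x)) t x = df (F t x) * dt F t x.
Proof. exact: dt_is_derive. Qed.

Lemma dx_comp i t x : dx i (fun t x => f (F t x)) t x = df (F t x) * dx i F t x.
Proof. exact: dx_is_derive. Qed.

End Composition.

Section Sum.
Variables (n : nat) (F : 'I_n -> sfield).
Hypothesis HF : forall k, partial_derivable (F k).

Let is_derive_dt_sum t x :
  is_derive t 1 (fun tau => \sum_k F k tau x) (\sum_k dt (F k) t x).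
Proof.
have -> : (fun tau => \sum_k F k tau x) = \sum_k (fun tau => F k tau x).
  by apply/funext => tau; rewrite fct_sumE.
exact: is_derive_sum (fun k => is_derive_dt t x (HF k)).
Qed.

Let is_derive_dx_sum t x i :
  is_derive (0 : R) 1 (fun h => \sum_k F k t (x + h *: ei R i)) (\sum_k dx i (F k) t x).
Proof.
have -> : (fun h => \sum_k F k t (x + h *: ei R i)) = \sum_k (fun h => F k t (x + h *: ei R i)).
  by apply/funext => h; rewrite fct_sumE.
exact: is_derive_sum (fun k => is_derive_dx t x i (HF k)).
Qed.

Lemma partial_derivable_sum : partial_derivable (fun t x => \sum_k F k t x).
Proof. exact: partial_derivableP is_derive_dt_sum is_derive_dx_sum. Qed.

Lemma dt_sum t x : dt (fun t x => \sum_k F k t x) t x = \sum_k dt (F k) t x.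
Proof. exact: dt_is_derive. Qed.

Lemma dx_sum i t x : dx i (fun t x => \sum_k F k t x) t x = \sum_k dx i (F k) t x.
Proof. exact: dx_is_derive. Qed.

End Sum.

Lemma sum_dx_delta (F : 'I_d -> sfield) (P : sfield) j t x :
  (forall i, partial_derivable (F i)) -> partial_derivable P ->
  \sum_i dx i (fun t x => F i t x + (if i == j then P t x else 0)) t x
  = \sum_i dx i (F i) t x + dx j P t x.
Proof.
move=> HF HP.
have dx_delta i : dx i (fun t x => F i t x + (if i == j then P t x else 0)) t x
    = dx i (F i) t x + (if i == j then dx i P t x else 0).
  case: (i == j); first exact: (dxD (HF i) HP).
  by rewrite (dxD (HF i) (partial_derivableC 0)) dxC.
rewrite (eq_bigr _ (fun i _ => dx_delta i)) big_split /= -big_mkcond.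
by rewrite big_pred1_eq.
Qed.
End PartialDerivatives.

Section MaterialDerivative.
Variables (R : realType) (d : nat) (u : 'I_d -> R -> 'rV[R]_d -> R).
Notation sfield := (R -> 'rV[R]_d -> R).
Implicit Types (F G : sfield) (t : R) (x : 'rV[R]_d).

Definition material F t x := dt F t x + advect u F t x.

Lemma material_linear F G H (a b : R) t x :
  dt H t x = a * dt F t x + b * dt G t x ->
  (forall i, dx i H t x = a * dx i F t x + b * dx i G t x) ->
  material H t x = a * material F t x + b * material G t x.
Proof.
move=> Ht Hx; rewrite /material /advect Ht.
under eq_bigr do rewrite Hx mulrDr mulrCA [u _ _ _ * (b * _)]mulrCA.
by rewrite big_split /= -!mulr_sumr; ring.
Qed.

Lemma materialC (c : R) t x : material (fun _ _ => c) t x = 0.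
Proof. by rewrite /material /advect dtC big1 ?addr0 // => i _; rewrite dxC mulr0. Qed.

Lemma materialD F G t x : partial_derivable F -> partial_derivable G ->
  material (fun t x => F t x + G t x) t x = material F t x + material G t x.
Proof.
move=> HF HG; rewrite -[material F t x]mul1r -[material G t x]mul1r.
by apply: material_linear => [|i]; rewrite !mul1r; [apply: dtD | apply: dxD].
Qed.

Lemma materialB F G t x : partial_derivable F -> partial_derivable G ->
  material (fun t x => F t x - G t x) t x = material F t x - material G t x.
Proof.
move=> HF HG; rewrite -[material F t x]mul1r -mulN1r.
by apply: material_linear => [|i]; rewrite mul1r mulN1r; [apply: dtB | apply: dxB].
Qed.

Lemma materialM F G t x : partial_derivable F -> partial_derivable G ->
  material (fun t x => F t x * G t x) t x = F t x * material G t x + G t x * material F t x.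
Proof. by move=> HF HG; apply: material_linear => [|i]; [apply: dtM | apply: dxM]. Qed.

Lemma material_comp (f df : R -> R) F t x :
  (forall t x, is_derive (F t x) 1 f (df (F t x))) -> partial_derivable F ->
  material (fun t x => f (F t x)) t x = df (F t x) * material F t x.
Proof.
move=> Hf HF; rewrite -[RHS]addr0 -[X in _ + X](mul0r (material F t x)).
by apply: material_linear => [|i]; rewrite mul0r addr0; [apply: dt_comp | apply: dx_comp].
Qed.

Lemma material_sum n (F : 'I_n -> sfield) t x : (forall k, partial_derivable (F k)) ->
  material (fun t x => \sum_k F k t x) t x = \sum_k material (F k) t x.
Proof.
move=> HF; rewrite /material /advect dt_sum // big_split /= exchange_big /=.
by congr (_ + _); apply: eq_bigr => i _; rewrite dx_sum // mulr_sumr.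
Qed.

Lemma materialZ (c : R) F t x : partial_derivable F ->
  material (fun t x => c * F t x) t x = c * material F t x.
Proof.
by move=> HF; rewrite (materialM _ _ (partial_derivableC c) HF) materialC mulr0 addr0.
Qed.

Lemma material_affine (c k : R) F t x : partial_derivable F ->
  material (fun t x => c * F t x + k) t x = c * material F t x.
Proof.
move=> HF; have HcF := partial_derivableM (partial_derivableC c) HF.
by rewrite (materialD _ _ HcF (partial_derivableC k)) materialZ // materialC addr0.
Qed.

Section PositiveField.
Variable F : sfield.
Hypotheses (F_gt0 : forall t x, 0 < F t x) (HF : partial_derivable F).

Lemma partial_derivable_ln : partial_derivable (fun t x => ln (F t x)).
Proof. exact: (partial_derivable_comp (fun t x => is_derive1_ln (F_gt0 t x))). Qed.

Lemma material_ln t x : material (fun t x => ln (F t x)) t x = material F t x / F t x.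
Proof. by rewrite mulrC (material_comp _ _ (fun t x => is_derive1_ln (F_gt0 t x))). Qed.

End PositiveField.

Lemma conservative_form F t x : partial_derivable F -> (forall i, partial_derivable (u i)) ->
  dt F t x + \sum_i dx i (fun t x => F t x * u i t x) t x
  = material F t x + F t x * divergence u t x.
Proof.
move=> HF Hu; rewrite /material /advect /divergence -addrA mulr_sumr -big_split /=.
by congr (_ + _); apply: eq_bigr => i _; rewrite (dxM HF (Hu i)) addrC.
Qed.

Lemma conservative_form_flux F G t x :
  partial_derivable F -> partial_derivable G -> (forall i, partial_derivable (u i)) ->
  dt F t x + \sum_i dx i (fun t x => (F t x + G t x) * u i t x) t x
  = material F t x + F t x * divergence u t x + (advect u G t x + G t x * divergence u t x).
Proof.
move=> HF HG Hu; have := conservative_form t x (partial_derivableD HF HG) Hu.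
rewrite dtD // materialD // {2}/material; lra.
Qed.

Lemma material_density_ratio N rho t x :
  partial_derivable N -> partial_derivable rho -> (forall t x, rho t x != 0) ->
  material N t x = - (N t x * divergence u t x) ->
  material rho t x = - (rho t x * divergence u t x) ->
  material (fun t x => N t x / rho t x) t x = 0.
Proof.
move=> HN Hrho rho_neq0 DN Drho.
pose dinv y : R := - y ^- 2.
have Dinv t' x' : is_derive (rho t' x') 1 GRing.inv (dinv (rho t' x')).
  by have := is_deriveV (rho_neq0 t' x') (is_derive_id (rho t' x') 1); rewrite scaler1.
have Hinv := partial_derivable_comp Dinv Hrho.
by rewrite materialM // (material_comp _ _ Dinv) // DN Drho /dinv; field.
Qed.

End MaterialDerivative.

Section StiffenedGas.
Variables (R : realType) (gam Cv pi r P : R).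
Hypotheses (gam_gt1 : 1 < gam) (Cv_gt0 : 0 < Cv) (r_gt0 : 0 < r).

Let gam_gt0 : 0 < gam. Proof. by apply: lt_trans gam_gt1. Qed.
Let gam1_gt0 : 0 < gam - 1. Proof. by rewrite subr_gt0. Qed.

Lemma sg_pressureK e : sg_pressure gam pi r e = P -> e = (P + pi) / ((gam - 1) * r).
Proof. by move=> <-; rewrite /sg_pressure; field; rewrite !gt_eqF. Qed.

Lemma sg_temperatureE :
  sg_temperature gam Cv pi r ((P + pi) / ((gam - 1) * r))
  = (gam * P + pi) / (gam * (gam - 1) * Cv * r).
Proof. by rewrite /sg_temperature; field; rewrite !gt_eqF. Qed.

End StiffenedGas.

Section MixtureAlgebra.
Variables (R : realType) (gp gm pip pim a b rp rm P : R).
Let Xp := gp * P + pip.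
Let Xm := gm * P + pim.
Hypotheses (gp_gt1 : 1 < gp) (gm_gt1 : 1 < gm) (a_ge0 : 0 <= a) (b_ge0 : 0 <= b)
  (ab1 : a + b = 1) (rp_gt0 : 0 < rp) (rm_gt0 : 0 < rm)
  (Xp_gt0 : 0 < Xp) (Xm_gt0 : 0 < Xm).
Let kp := gp - 1.
Let km := gm - 1.
Let gp_gt0 : 0 < gp. Proof. exact: lt_trans gp_gt1. Qed.
Let gm_gt0 : 0 < gm. Proof. exact: lt_trans gm_gt1. Qed.
Let kp_gt0 : 0 < kp. Proof. by rewrite subr_gt0. Qed.
Let km_gt0 : 0 < km. Proof. by rewrite subr_gt0. Qed.
Let bE : b = 1 - a. Proof. by rewrite -ab1 addrC addKr. Qed.

(* [Xp] and [Xm] are ρ± (c_s±)², [ra2] is ρ a² and [M] is ρ a² / (ρ c_s²). *)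
Let ra2 := a * Xp / kp + b * Xm / km.
Let M := ra2 * (a * gp / Xp + b * gm / Xm) - 1.

Let ra2_gt0 : 0 < ra2.
Proof.
rewrite /ra2; have [a0|a_neq0] := eqVneq a 0.
  by rewrite bE a0 subr0 mul0r mul0r add0r mul1r divr_gt0.
apply: ltr_pwDl; last by rewrite divr_ge0 ?mulr_ge0 // ltW.
by rewrite divr_gt0 ?mulr_gt0 // lt_def a_neq0.
Qed.

Let M_gt0 : 0 < M.
Proof.
pose N := (km * Xp - kp * Xm) ^+ 2 + km * Xp ^+ 2 + kp * Xm ^+ 2.
have -> : M = a ^+ 2 / kp + b ^+ 2 / km + a * b * N / (kp * km * Xp * Xm).
  by rewrite /M /ra2 /N /kp /km bE; field; rewrite !gt_eqF.
have N_ge0 : 0 <= N by rewrite !addr_ge0 ?sqr_ge0 // mulr_ge0 ?sqr_ge0 ?ltW.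
apply: ltr_pwDl; last by rewrite divr_ge0 ?mulr_ge0 // ltW // !mulr_gt0.
have [a0|a_neq0] := eqVneq a 0.
  by rewrite bE a0 subr0 expr0n mul0r add0r expr1n mul1r invr_gt0.
apply: ltr_pwDl; last by rewrite divr_ge0 ?sqr_ge0 ?ltW.
by rewrite divr_gt0 // exprn_gt0 // lt_def a_neq0.
Qed.

Let mix_rho_a2E : mix_rho_a2 gp gm pip pim (a - b) rp rm P = ra2.
Proof. by rewrite /mix_rho_a2 /sound2 /ra2 /Xp /Xm /kp /km bE; field; rewrite !gt_eqF. Qed.

Let mix_rho_cs2E : mix_rho_cs2 gp gm pip pim (a - b) rp rm P = ra2 / M.
Proof.
rewrite /mix_rho_cs2 mix_rho_a2E -[RHS]invf_div; congr GRing.inv.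
by rewrite /sound2 /M -/Xp -/Xm bE; field; rewrite !gt_eqF.
Qed.

(* Values of D α+, D ρ+ / ρ+, D ρ- / ρ-, D p and ∇·u at a point. *)
Variables (Da qp qm DP th : R).
Hypotheses (mass_p : Da + a * qp + a * th = 0) (mass_m : - Da + b * qm + b * th = 0).
Hypothesis energy :
  ((P + pip) / kp - (P + pim) / km) * Da + (a / kp + b / km) * DP
  + (a * (P + pip) / kp + b * (P + pim) / km + P) * th = 0.

Section TemperatureEquilibrium.
Hypothesis temperature : gp * DP / Xp - qp = gm * DP / Xm - qm.

Lemma volume_fraction_rateE : Da = a * b * DP * (gm / Xm - gp / Xp).
Proof.
have rates : DP * (gm / Xm - gp / Xp) = qm - qp.
  have -> : qm = gm * DP / Xm - (gp * DP / Xp - qp) by rewrite temperature; ring.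
  by ring.
have -> : a * b * DP * (gm / Xm - gp / Xp) = a * (b * qm) - b * (a * qp).
  by rewrite -mulrA rates; ring.
have -> : a * qp = - Da - a * th by move: mass_p; lra.
have -> : b * qm = Da - b * th by move: mass_m; lra.
by rewrite -[LHS]mul1r -ab1; ring.
Qed.

Lemma pressure_rate_balance : DP + mix_rho_cs2 gp gm pip pim (a - b) rp rm P * th = 0.
Proof.
have balance : DP * M + ra2 * th = 0.
  rewrite -energy volume_fraction_rateE /M /ra2 /Xp /Xm /kp /km bE.
  by field; rewrite !gt_eqF.
rewrite mix_rho_cs2E; apply: (@mulIf _ M); first by rewrite gt_eqF.
by rewrite mul0r -balance; field; rewrite gt_eqF.
Qed.

Lemma volume_fraction_rate_balance :
  2 * Da + (1 - (a - b) ^+ 2) * mix_delta gp gm pip pim (a - b) rp rm P * th = 0.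
Proof.
have DPE : DP = - (ra2 / M * th).
  by apply/eqP; rewrite -addr_eq0 -mix_rho_cs2E pressure_rate_balance.
rewrite /mix_delta mix_rho_cs2E volume_fraction_rateE DPE /sound2 /Xp /Xm bE.
by field; rewrite !gt_eqF.
Qed.

End TemperatureEquilibrium.

Lemma entropy_rate_balance Cvp Cvm T :
  0 < Cvp -> 0 < Cvm -> 0 < T ->
  T = Xp / (gp * kp * Cvp * rp) -> T = Xm / (gm * km * Cvm * rm) ->
  a * rp * (Cvp * gp * (DP / Xp - qp)) + b * rm * (Cvm * gm * (DP / Xm - qm)) = 0.
Proof.
move=> Cvp_gt0 Cvm_gt0 T_gt0 Tp Tm.
(* Gibbs relation: T (α+ρ+ Ds+ + α-ρ- Ds-) is the internal energy balance. *)
have gibbs : a * Xp / kp * (DP / Xp - qp) + b * Xm / km * (DP / Xm - qm) = 0.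
  have -> : a * Xp / kp * (DP / Xp - qp) + b * Xm / km * (DP / Xm - qm)
      = (a / kp + b / km) * DP - Xp / kp * (a * qp) - Xm / km * (b * qm).
    by field; rewrite !gt_eqF.
  have -> : a * qp = - Da - a * th by move: mass_p; lra.
  have -> : b * qm = Da - b * th by move: mass_m; lra.
  by rewrite -energy /Xp /Xm /kp /km bE; field; rewrite !gt_eqF.
have -> : rp = Xp / (gp * kp * Cvp * T).
  by rewrite Tp; field; rewrite !gt_eqF.
have -> : rm = Xm / (gm * km * Cvm * T).
  by rewrite Tm; field; rewrite !gt_eqF.
by rewrite -[RHS](mulr0 T^-1) -gibbs; field; rewrite !gt_eqF.
Qed.

End MixtureAlgebra.

Section StiffenedGasPhase.
Variables (R : realType) (d : nat) (u : 'I_d -> R -> 'rV[R]_d -> R).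
Variables (gam Cv pi s0 : R) (p r e : R -> 'rV[R]_d -> R).
Hypotheses (gam_gt1 : 1 < gam) (Cv_gt0 : 0 < Cv).
Hypotheses (p_pd : partial_derivable p) (r_pd : partial_derivable r).
Hypothesis r_gt0 : forall t x, 0 < r t x.
Hypothesis pressure : forall t x, sg_pressure gam pi (r t x) (e t x) = p t x.
Hypothesis temperature_gt0 : forall t x, 0 < sg_temperature gam Cv pi (r t x) (e t x).

Local Notation D := (material u).

Let gam_gt0 : 0 < gam. Proof. exact: lt_trans gam_gt1. Qed.
Let gam1_gt0 : 0 < gam - 1. Proof. by rewrite subr_gt0. Qed.

Lemma sg_temperature_pressureE t x : sg_temperature gam Cv pi (r t x) (e t x)
  = (gam * p t x + pi) / (gam * (gam - 1) * Cv * r t x).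
Proof. by rewrite (sg_pressureK gam_gt1 (r_gt0 t x) (pressure t x)) sg_temperatureE. Qed.

Lemma stiffened_pressure_gt0 t x : 0 < gam * p t x + pi.
Proof.
have := temperature_gt0 t x; rewrite sg_temperature_pressureE pmulr_lgt0 // invr_gt0.
by rewrite !mulr_gt0 ?r_gt0.
Qed.

Let X_pd : partial_derivable (fun t x => gam * p t x + pi).
Proof.
exact: partial_derivableD (partial_derivableM (partial_derivableC gam) p_pd) (partial_derivableC pi).
Qed.

Let ln_temperature :
  (fun t x => ln (sg_temperature gam Cv pi (r t x) (e t x)))
  = (fun t x => ln (gam * p t x + pi) - ln (r t x) - ln (gam * (gam - 1) * Cv)).
Proof.
apply/funext => t; apply/funext => x.
have X_gt0 := stiffened_pressure_gt0 t x.
have c_gt0 : 0 < gam * (gam - 1) * Cv by rewrite !mulr_gt0.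
by rewrite sg_temperature_pressureE ln_div ?lnM ?posrE ?mulr_gt0 //; ring.
Qed.

Let lnX_pd := partial_derivable_ln stiffened_pressure_gt0 X_pd.
Let lnr_pd := partial_derivable_ln r_gt0 r_pd.

Lemma material_ln_temperature t x :
  D (fun t x => ln (sg_temperature gam Cv pi (r t x) (e t x))) t x
  = gam * D p t x / (gam * p t x + pi) - D r t x / r t x.
Proof.
rewrite ln_temperature (materialB u t x (partial_derivableB lnX_pd lnr_pd) (partial_derivableC _)).
rewrite (materialB u t x lnX_pd lnr_pd) materialC subr0.
by rewrite (material_ln u stiffened_pressure_gt0 X_pd) (material_ln u r_gt0 r_pd) material_affine.
Qed.

Let lnT_pd : partial_derivable (fun t x => ln (sg_temperature gam Cv pi (r t x) (e t x))).
Proof.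
rewrite ln_temperature.
exact: partial_derivableB (partial_derivableB lnX_pd lnr_pd) (partial_derivableC _).
Qed.

Let scaled_lnr_pd := partial_derivableM (partial_derivableC (gam - 1)) lnr_pd.

Lemma partial_derivable_sg_entropy :
  partial_derivable (fun t x => sg_entropy gam Cv pi s0 (r t x) (e t x)).
Proof.
exact: partial_derivableD (partial_derivableM (partial_derivableC Cv)
  (partial_derivableB lnT_pd scaled_lnr_pd)) (partial_derivableC s0).
Qed.

Lemma material_sg_entropy t x :
  D (fun t x => sg_entropy gam Cv pi s0 (r t x) (e t x)) t x
  = Cv * gam * (D p t x / (gam * p t x + pi) - D r t x / r t x).
Proof.
rewrite /sg_entropy (material_affine u Cv s0 t x (partial_derivableB lnT_pd scaled_lnr_pd)).
rewrite (materialB u t x lnT_pd scaled_lnr_pd) material_ln_temperature.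
rewrite (materialZ u (gam - 1) t x lnr_pd) (material_ln u r_gt0 r_pd).
by ring.
Qed.

End StiffenedGasPhase.

Section HomogeneousTwoFluidModel.
Variables (R : realType) (d : nat) (gp gm Cvp Cvm pip pim s0p s0m : R) (g : 'I_d -> R).
Variables (ap am rp rm rho p e ep em : R -> 'rV[R]_d -> R) (u : 'I_d -> R -> 'rV[R]_d -> R).
Hypotheses (gp_gt1 : 1 < gp) (gm_gt1 : 1 < gm) (Cvp_gt0 : 0 < Cvp) (Cvm_gt0 : 0 < Cvm).
Hypothesis fractions :
  forall t x, 0 <= ap t x <= 1 /\ 0 <= am t x <= 1 /\ ap t x + am t x = 1.
Hypothesis positivity : forall t x, 0 < rp t x /\ 0 < rm t x /\ 0 < e t x.
Hypothesis rhoE : forall t x, rho t x = ap t x * rp t x + am t x * rm t x.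
Hypothesis eos : forall t x,
  (1 + (ap t x - am t x)) * rp t x + (1 - (ap t x - am t x)) * rm t x = 2 * rho t x /\
  (1 + (ap t x - am t x)) * rp t x * ep t x
    + (1 - (ap t x - am t x)) * rm t x * em t x = 2 * rho t x * e t x /\
  sg_pressure gp pip (rp t x) (ep t x) = p t x /\
  sg_pressure gm pim (rm t x) (em t x) = p t x /\
  sg_temperature gp Cvp pip (rp t x) (ep t x) = sg_temperature gm Cvm pim (rm t x) (em t x) /\
  0 < sg_temperature gp Cvp pip (rp t x) (ep t x).
Hypotheses (ap_pd : partial_derivable ap) (am_pd : partial_derivable am)
  (rp_pd : partial_derivable rp) (rm_pd : partial_derivable rm)
  (p_pd : partial_derivable p) (e_pd : partial_derivable e)
  (u_pd : forall i, partial_derivable (u i)).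
Hypothesis mass_p : forall t x,
  dt (fun t x => ap t x * rp t x) t x
  + \sum_i dx i (fun t x => ap t x * rp t x * u i t x) t x = 0.
Hypothesis mass_m : forall t x,
  dt (fun t x => am t x * rm t x) t x
  + \sum_i dx i (fun t x => am t x * rm t x * u i t x) t x = 0.
Hypothesis momentum : forall j t x,
  dt (fun t x => rho t x * u j t x) t x
  + \sum_i dx i (fun t x => rho t x * u j t x * u i t x
                            + (if i == j then p t x else 0)) t x
  = rho t x * g j.
Hypothesis energy : forall t x,
  dt (fun t x => rho t x * (e t x + (1 / 2) * \sum_k u k t x ^+ 2)) t x
  + \sum_i dx i (fun t x =>
       (rho t x * (e t x + (1 / 2) * \sum_k u k t x ^+ 2) + p t x) * u i t x) t x
  = rho t x * \sum_k g k * u k t x.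

Local Notation D := (material u).
Local Notation div := (divergence u).

Let ap_ge0 t x : 0 <= ap t x. Proof. by case: (fractions t x) => /andP[]. Qed.
Let am_ge0 t x : 0 <= am t x. Proof. by case: (fractions t x) => _ [/andP[]]. Qed.
Let fractions1 t x : ap t x + am t x = 1. Proof. by case: (fractions t x) => _ []. Qed.
Let rp_gt0 t x : 0 < rp t x. Proof. by case: (positivity t x). Qed.
Let rm_gt0 t x : 0 < rm t x. Proof. by case: (positivity t x) => _ []. Qed.

Let rho_gt0 t x : 0 < rho t x.
Proof.
rewrite rhoE; have [a0|a_neq0] := eqVneq (ap t x) 0.
  by rewrite a0 mul0r add0r (_ : am t x = 1) ?mul1r // -(fractions1 t x) a0 add0r.
by apply: ltr_pwDl; [rewrite mulr_gt0 // lt_def a_neq0 ap_ge0 | rewrite mulr_ge0 // ltW].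
Qed.

Let pressure_p t x : sg_pressure gp pip (rp t x) (ep t x) = p t x.
Proof. by case: (eos t x) => _ [_ []]. Qed.
Let pressure_m t x : sg_pressure gm pim (rm t x) (em t x) = p t x.
Proof. by case: (eos t x) => _ [_ [_ []]]. Qed.
Let temperature_eq t x :
  sg_temperature gp Cvp pip (rp t x) (ep t x) = sg_temperature gm Cvm pim (rm t x) (em t x).
Proof. by case: (eos t x) => _ [_ [_ [_ []]]]. Qed.
Let temperature_p_gt0 t x : 0 < sg_temperature gp Cvp pip (rp t x) (ep t x).
Proof. by case: (eos t x) => _ [_ [_ [_ []]]]. Qed.
Let temperature_m_gt0 t x : 0 < sg_temperature gm Cvm pim (rm t x) (em t x).
Proof. by rewrite -temperature_eq. Qed.

Let Xp_gt0 := stiffened_pressure_gt0 gp_gt1 Cvp_gt0 rp_gt0 pressure_p temperature_p_gt0.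
Let Xm_gt0 := stiffened_pressure_gt0 gm_gt1 Cvm_gt0 rm_gt0 pressure_m temperature_m_gt0.

Let ep_eq t x : ep t x = (p t x + pip) / ((gp - 1) * rp t x).
Proof. exact (sg_pressureK gp_gt1 (rp_gt0 t x) (pressure_p t x)). Qed.

Let em_eq t x : em t x = (p t x + pim) / ((gm - 1) * rm t x).
Proof. exact (sg_pressureK gm_gt1 (rm_gt0 t x) (pressure_m t x)). Qed.

Let temperature_pE t x : sg_temperature gp Cvp pip (rp t x) (ep t x)
  = (gp * p t x + pip) / (gp * (gp - 1) * Cvp * rp t x).
Proof. exact: sg_temperature_pressureE gp_gt1 Cvp_gt0 rp_gt0 pressure_p t x. Qed.
Let temperature_mE t x : sg_temperature gp Cvp pip (rp t x) (ep t x)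
  = (gm * p t x + pim) / (gm * (gm - 1) * Cvm * rm t x).
Proof.
by rewrite temperature_eq; exact: sg_temperature_pressureE gm_gt1 Cvm_gt0 rm_gt0 pressure_m t x.
Qed.

Let rho_field : rho = (fun t x => ap t x * rp t x + am t x * rm t x).
Proof. by apply/funext => t; apply/funext => x; apply: rhoE. Qed.

Let rho_pd : partial_derivable rho.
Proof. by rewrite rho_field; apply: partial_derivableD; apply: partial_derivableM. Qed.

Lemma material_am t x : D am t x = - D ap t x.
Proof.
have : D (fun t x => ap t x + am t x) t x = 0.
  by rewrite (_ : (fun t x => _) = fun _ _ => 1) ?materialC //;
     apply/funext => t'; apply/funext => x'.
by rewrite (materialD u t x ap_pd am_pd) addrC => /eqP; rewrite addr_eq0 => /eqP.
Qed.

Let arp_pd : partial_derivable (fun t x => ap t x * rp t x).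
Proof. exact: partial_derivableM. Qed.
Let arm_pd : partial_derivable (fun t x => am t x * rm t x).
Proof. exact: partial_derivableM. Qed.

Lemma continuity_p t x :
  D (fun t x => ap t x * rp t x) t x = - (ap t x * rp t x * div t x).
Proof.
have := mass_p t x; rewrite (conservative_form t x arp_pd u_pd).
by move/eqP; rewrite addr_eq0 => /eqP.
Qed.

Lemma continuity_m t x :
  D (fun t x => am t x * rm t x) t x = - (am t x * rm t x * div t x).
Proof.
have := mass_m t x; rewrite (conservative_form t x arm_pd u_pd).
by move/eqP; rewrite addr_eq0 => /eqP.
Qed.

Lemma material_rho t x : D rho t x = - (rho t x * div t x).
Proof. by rewrite rho_field (materialD u t x arp_pd arm_pd) continuity_p continuity_m; ring. Qed.

Lemma mass_rate_p t x :
  D ap t x + ap t x * (D rp t x / rp t x) + ap t x * div t x = 0.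
Proof.
have := continuity_p t x; rewrite (materialM u t x ap_pd rp_pd) => E.
have -> : D ap t x + ap t x * (D rp t x / rp t x) + ap t x * div t x
    = (ap t x * D rp t x + rp t x * D ap t x + ap t x * rp t x * div t x) / rp t x.
  by field; rewrite gt_eqF.
by rewrite E addNr mul0r.
Qed.

Lemma mass_rate_m t x :
  - D ap t x + am t x * (D rm t x / rm t x) + am t x * div t x = 0.
Proof.
have := continuity_m t x; rewrite (materialM u t x am_pd rm_pd) material_am => E.
have -> : - D ap t x + am t x * (D rm t x / rm t x) + am t x * div t x
    = (am t x * D rm t x + rm t x * - D ap t x + am t x * rm t x * div t x) / rm t x.
  by field; rewrite gt_eqF.
by rewrite E addNr mul0r.
Qed.

Lemma velocity_rate j t x : rho t x * D (u j) t x + dx j p t x = rho t x * g j.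
Proof.
have ru_pd := partial_derivableM rho_pd (u_pd j).
have ruu_pd i := partial_derivableM ru_pd (u_pd i).
rewrite -(momentum j t x) (sum_dx_delta j t x ruu_pd p_pd) addrA.
by rewrite (conservative_form t x ru_pd u_pd) (materialM u t x rho_pd (u_pd j)) material_rho; ring.
Qed.

Let u2_pd k : partial_derivable (fun t x => u k t x ^+ 2).
Proof. exact (partial_derivableM (u_pd k) (u_pd k)). Qed.

Lemma kinetic_energy_rate t x :
  rho t x * D (fun t x => \sum_k u k t x ^+ 2) t x
  = 2 * (rho t x * \sum_k g k * u k t x - advect u p t x).
Proof.
rewrite (material_sum u t x u2_pd) mulr_sumr /advect mulr_sumr -sumrB mulr_sumr.
apply: eq_bigr => k _.
rewrite (_ : D _ t x = D (fun t x => u k t x * u k t x) t x) //.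
rewrite (materialM u t x (u_pd k) (u_pd k)).
transitivity (2 * u k t x * (rho t x * D (u k) t x)); first by ring.
by rewrite -[rho t x * D _ _ _](addrK (dx k p t x)) velocity_rate; ring.
Qed.

Lemma internal_energy_rate t x : rho t x * D e t x + p t x * div t x = 0.
Proof.
have Q_pd := partial_derivable_sum u2_pd.
have hQ_pd := partial_derivableM (partial_derivableC (1 / 2)) Q_pd.
have E_pd := partial_derivableD e_pd hQ_pd.
have := energy t x.
rewrite (conservative_form_flux t x (partial_derivableM rho_pd E_pd) p_pd u_pd).
rewrite (materialM u t x rho_pd E_pd) (materialD u t x e_pd hQ_pd).
rewrite (materialZ u (1 / 2) t x Q_pd) material_rho.
by move: (kinetic_energy_rate t x); lra.
Qed.

Let rho_e t x : rho t x * e t x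
  = ap t x * ((gp - 1)^-1 * p t x + pip / (gp - 1))
    + am t x * ((gm - 1)^-1 * p t x + pim / (gm - 1)).
Proof.
have [_ [mix_e _]] := eos t x.
have plusE : 1 + (ap t x - am t x) = 2 * ap t x by move: (fractions1 t x); lra.
have minusE : 1 - (ap t x - am t x) = 2 * am t x by move: (fractions1 t x); lra.
rewrite plusE minusE ep_eq em_eq in mix_e.
apply: (@mulfI _ 2) => //; rewrite mulrA -mix_e.
have gp1_gt0 : 0 < gp - 1 by rewrite subr_gt0.
have gm1_gt0 : 0 < gm - 1 by rewrite subr_gt0.
by field; rewrite !gt_eqF.
Qed.

Lemma energy_rate t x :
  ((p t x + pip) / (gp - 1) - (p t x + pim) / (gm - 1)) * D ap t x
  + (ap t x / (gp - 1) + am t x / (gm - 1)) * D p t x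
  + (ap t x * (p t x + pip) / (gp - 1) + am t x * (p t x + pim) / (gm - 1) + p t x)
    * div t x = 0.
Proof.
have aff_pd c k : partial_derivable (fun t x => c * p t x + k).
  exact: partial_derivableD (partial_derivableM (partial_derivableC c) p_pd) (partial_derivableC k).
have Dre : D (fun t x => rho t x * e t x) t x
    = - (p t x * div t x) - rho t x * e t x * div t x.
  rewrite (materialM u t x rho_pd e_pd) material_rho.
  by move: (internal_energy_rate t x); lra.
have rho_e_field : (fun t x => rho t x * e t x) = (fun t x =>
    ap t x * ((gp - 1)^-1 * p t x + pip / (gp - 1))
    + am t x * ((gm - 1)^-1 * p t x + pim / (gm - 1))).
  by apply/funext => t'; apply/funext => x'; apply: rho_e.
move: Dre; rewrite rho_e_field rho_e.
rewrite (materialD u t x (partial_derivableM ap_pd (aff_pd _ _))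
                         (partial_derivableM am_pd (aff_pd _ _))).
rewrite (materialM u t x ap_pd (aff_pd _ _)) (materialM u t x am_pd (aff_pd _ _)).
rewrite !(material_affine u _ _ t x p_pd) material_am.
set kp := (gp - 1)^-1; set km := (gm - 1)^-1; lra.
Qed.

Lemma temperature_rate t x :
  gp * D p t x / (gp * p t x + pip) - D rp t x / rp t x
  = gm * D p t x / (gm * p t x + pim) - D rm t x / rm t x.
Proof.
rewrite -(material_ln_temperature u gp_gt1 Cvp_gt0 p_pd rp_pd rp_gt0 pressure_p temperature_p_gt0).
rewrite -(material_ln_temperature u gm_gt1 Cvm_gt0 p_pd rm_pd rm_gt0 pressure_m temperature_m_gt0).
by congr (D _ t x); apply/funext => t'; apply/funext => x'; rewrite temperature_eq.
Qed.

Lemma velocity_equation j t x :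
  dt (u j) t x + advect u (u j) t x + (1 / rho t x) * dx j p t x = g j.
Proof.
have rho_neq0 : rho t x != 0 by rewrite gt_eqF.
apply: (@mulfI _ (rho t x)) => //; rewrite -velocity_rate /material.
by field.
Qed.

Lemma pressure_equation t x :
  dt p t x + advect u p t x
  + mix_rho_cs2 gp gm pip pim (ap t x - am t x) (rp t x) (rm t x) (p t x) * div t x = 0.
Proof.
exact: (pressure_rate_balance gp_gt1 gm_gt1 (ap_ge0 t x) (am_ge0 t x) (fractions1 t x)
  (rp_gt0 t x) (rm_gt0 t x) (Xp_gt0 t x) (Xm_gt0 t x) (mass_rate_p t x) (mass_rate_m t x)
  (energy_rate t x) (temperature_rate t x)).
Qed.

Lemma volume_fraction_equation t x :
  dt (fun t x => ap t x - am t x) t x + advect u (fun t x => ap t x - am t x) t x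
  + (1 - (ap t x - am t x) ^+ 2)
    * mix_delta gp gm pip pim (ap t x - am t x) (rp t x) (rm t x) (p t x) * div t x = 0.
Proof.
have Dalpha : D (fun t x => ap t x - am t x) t x = 2 * D ap t x.
  by rewrite (materialB u t x ap_pd am_pd) material_am; ring.
rewrite -[dt _ t x + _]/(D (fun t x => ap t x - am t x) t x) Dalpha.
exact: (volume_fraction_rate_balance gp_gt1 gm_gt1 (ap_ge0 t x) (am_ge0 t x) (fractions1 t x)
  (rp_gt0 t x) (rm_gt0 t x) (Xp_gt0 t x) (Xm_gt0 t x) (mass_rate_p t x) (mass_rate_m t x)
  (energy_rate t x) (temperature_rate t x)).
Qed.

Lemma entropy_equation :
  let s := fun t x =>
    ((1 + (ap t x - am t x)) * rp t x * sg_entropy gp Cvp pip s0p (rp t x) (ep t x)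
     + (1 - (ap t x - am t x)) * rm t x * sg_entropy gm Cvm pim s0m (rm t x) (em t x))
    / (2 * rho t x) in
  forall t x, dt s t x + advect u s t x = 0.
Proof.
move=> s t x.
pose sp t x := sg_entropy gp Cvp pip s0p (rp t x) (ep t x).
pose sm t x := sg_entropy gm Cvm pim s0m (rm t x) (em t x).
pose N t x := ap t x * rp t x * sp t x + am t x * rm t x * sm t x.
have sp_pd : partial_derivable sp :=
  partial_derivable_sg_entropy s0p gp_gt1 Cvp_gt0 p_pd rp_pd rp_gt0 pressure_p temperature_p_gt0.
have sm_pd : partial_derivable sm :=
  partial_derivable_sg_entropy s0m gm_gt1 Cvm_gt0 p_pd rm_pd rm_gt0 pressure_m temperature_m_gt0.
have N_pd : partial_derivable N :=
  partial_derivableD (partial_derivableM arp_pd sp_pd) (partial_derivableM arm_pd sm_pd).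
have sE : s = fun t x => N t x / rho t x.
  apply/funext => t'; apply/funext => x'; rewrite /s /N /sp /sm.
  have -> : 1 + (ap t' x' - am t' x') = 2 * ap t' x' by move: (fractions1 t' x'); lra.
  have -> : 1 - (ap t' x' - am t' x') = 2 * am t' x' by move: (fractions1 t' x'); lra.
  by field; rewrite gt_eqF.
have DN : D N t x = - (N t x * div t x).
  rewrite (materialD u t x (partial_derivableM arp_pd sp_pd) (partial_derivableM arm_pd sm_pd)).
  rewrite (materialM u t x arp_pd sp_pd) (materialM u t x arm_pd sm_pd) continuity_p continuity_m.
  rewrite (material_sg_entropy u s0p gp_gt1 Cvp_gt0 p_pd rp_pd rp_gt0 pressure_p temperature_p_gt0).
  rewrite (material_sg_entropy u s0m gm_gt1 Cvm_gt0 p_pd rm_pd rm_gt0 pressure_m temperature_m_gt0).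
  have := entropy_rate_balance gp_gt1 gm_gt1 (fractions1 t x) (rp_gt0 t x) (rm_gt0 t x)
    (Xp_gt0 t x) (Xm_gt0 t x) (mass_rate_p t x) (mass_rate_m t x) (energy_rate t x)
    Cvp_gt0 Cvm_gt0 (temperature_p_gt0 t x) (temperature_pE t x) (temperature_mE t x).
  rewrite /N; set Sp := Cvp * gp * _; set Sm := Cvm * gm * _; lra.
rewrite -[LHS]/(D s t x) sE.
exact: material_density_ratio N_pd rho_pd (fun t x => lt0r_neq0 (rho_gt0 t x)) DN
  (material_rho t x).
Qed.

End HomogeneousTwoFluidModel.

Theorem mainTheorem1 (R : realType) (d : nat)
  (gp gm Cvp Cvm pip pim s0p s0m : R) (g : 'I_d -> R)
  (ap am rp rm rho p e ep em : R -> 'rV[R]_d -> R)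
  (u : 'I_d -> R -> 'rV[R]_d -> R) :
  1 < gp -> 1 < gm -> 0 < Cvp -> 0 < Cvm -> 0 <= pip -> 0 <= pim ->
  (forall t x, 0 <= ap t x <= 1 /\ 0 <= am t x <= 1 /\ ap t x + am t x = 1) ->
  (forall t x, 0 < rp t x /\ 0 < rm t x /\ 0 < e t x) ->
  (forall t x, rho t x = ap t x * rp t x + am t x * rm t x) ->
  (forall t x,
     (1 + (ap t x - am t x)) * rp t x + (1 - (ap t x - am t x)) * rm t x
       = 2 * rho t x /\
     (1 + (ap t x - am t x)) * rp t x * ep t x
       + (1 - (ap t x - am t x)) * rm t x * em t x = 2 * rho t x * e t x /\
     sg_pressure gp pip (rp t x) (ep t x) = p t x /\
     sg_pressure gm pim (rm t x) (em t x) = p t x /\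
     sg_temperature gp Cvp pip (rp t x) (ep t x)
       = sg_temperature gm Cvm pim (rm t x) (em t x) /\
     0 < sg_temperature gp Cvp pip (rp t x) (ep t x)) ->
  partial_derivable ap -> partial_derivable am ->
  partial_derivable rp -> partial_derivable rm ->
  partial_derivable p -> partial_derivable e ->
  (forall i, partial_derivable (u i)) ->
  (forall t x,
     dt (fun t x => ap t x * rp t x) t x
     + \sum_i dx i (fun t x => ap t x * rp t x * u i t x) t x = 0) ->
  (forall t x,
     dt (fun t x => am t x * rm t x) t x
     + \sum_i dx i (fun t x => am t x * rm t x * u i t x) t x = 0) ->
  (forall j t x,
     dt (fun t x => rho t x * u j t x) t x
     + \sum_i dx i (fun t x => rho t x * u j t x * u i t x
                               + (if i == j then p t x else 0)) t x
     = rho t x * g j) ->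
  (forall t x,
     dt (fun t x => rho t x * (e t x + (1 / 2) * \sum_k u k t x ^+ 2)) t x
     + \sum_i dx i (fun t x =>
          (rho t x * (e t x + (1 / 2) * \sum_k u k t x ^+ 2) + p t x) * u i t x) t x
     = rho t x * \sum_k g k * u k t x) ->
  (forall j t x,
     dt (u j) t x + advect u (u j) t x + (1 / rho t x) * dx j p t x = g j) /\
  (forall t x,
     dt p t x + advect u p t x
     + mix_rho_cs2 gp gm pip pim (ap t x - am t x) (rp t x) (rm t x) (p t x)
       * divergence u t x = 0) /\
  (forall t x,
     dt (fun t x => ap t x - am t x) t x + advect u (fun t x => ap t x - am t x) t x
     + (1 - (ap t x - am t x) ^+ 2)
       * mix_delta gp gm pip pim (ap t x - am t x) (rp t x) (rm t x) (p t x)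
       * divergence u t x = 0) /\
  (let s := fun t x =>
       ((1 + (ap t x - am t x)) * rp t x * sg_entropy gp Cvp pip s0p (rp t x) (ep t x)
        + (1 - (ap t x - am t x)) * rm t x * sg_entropy gm Cvm pim s0m (rm t x) (em t x))
       / (2 * rho t x) in
   forall t x, dt s t x + advect u s t x = 0).
Proof.
move=> gp_gt1 gm_gt1 Cvp_gt0 Cvm_gt0 _ _ fractions positivity rhoE eos
  ap_pd am_pd rp_pd rm_pd p_pd e_pd u_pd mass_p mass_m momentum energy.
split; [|split; [|split]].
- exact: (velocity_equation fractions positivity rhoE
    ap_pd am_pd rp_pd rm_pd p_pd u_pd mass_p mass_m momentum).
- exact: (pressure_equation gp_gt1 gm_gt1 Cvp_gt0 Cvm_gt0 fractions positivity rhoE eos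
    ap_pd am_pd rp_pd rm_pd p_pd e_pd u_pd mass_p mass_m momentum energy).
- exact: (volume_fraction_equation gp_gt1 gm_gt1 Cvp_gt0 Cvm_gt0 fractions positivity rhoE eos
    ap_pd am_pd rp_pd rm_pd p_pd e_pd u_pd mass_p mass_m momentum energy).
- exact: (entropy_equation s0p s0m gp_gt1 gm_gt1 Cvp_gt0 Cvm_gt0 fractions positivity rhoE eos
    ap_pd am_pd rp_pd rm_pd p_pd e_pd u_pd mass_p mass_m momentum energy).
Qed.
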